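(* Let $K$ be a finite simplicial complex, $|\cdot|$ a norm on $\mathbb{R}^n$, $f\colon|K|\to\mathbb{R}^n$ a piecewise linear function such that on every simplex of $K$ the function $x\mapsto|f(x)|$ attains both its minimum and its maximum at a vertex, and let $\alpha>0$. Let $\chi\colon|K|\to\mathbb{R}$ be the piecewise linear function with vertex values $\chi(v)=0$ if $|f(v)|<\alpha$, $\chi(v)=1/2$ if $|f(v)|=\alpha$, and $\chi(v)=1$ if $|f(v)|>\alpha$, and put $X:=\chi^{-1}([0,1/2])$ and $A:=\chi^{-1}(\{1/2\})$. Then there exists a continuous extension $F\colon|f|^{-1}([0,\alpha])\to\mathbb{R}^n\setminus\{0\}$ of $f|_{|f|^{-1}(\{\alpha\})}$ if and only if there exists a continuous extension $G\colon X\to\mathbb{R}^n\setminus\{0\}$ of $f|_A$.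
   Context: A function is piecewise linear on $|K|$ if it is affine on each simplex of $K$; $|f|$ denotes $x\mapsto|f(x)|$. *)

From HB Require Import structures.
From mathcomp Require Import all_boot all_order all_algebra.
From mathcomp Require Import all_classical all_reals all_analysis.
Set Implicit Arguments. Unset Strict Implicit. Unset Printing Implicit Defensive.
Import Order.TTheory GRing.Theory Num.Theory.
Import numFieldNormedType.Exports.
Local Open Scope classical_set_scope.
Local Open Scope ring_scope.

(* Its geometric realization
   lives in R^m = 'rV[R]_m, vertex i being the standard basis vector e_i. *)
Definition is_simplicial_complex (m : nat) (K : {set {set 'I_m}}) : Prop :=
  (forall s, s \in K -> s != finset.set0) /\
  (forall s t : {set 'I_m}, s \in K -> t \subset s -> t != finset.set0 -> t \in K).

Definition vtx (R : realType) (m : nat) (i : 'I_m) : 'rV[R]_m :=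
  \row_j (if j == i then 1 else 0).

Arguments vtx R {m} i.

Definition geom_simplex (R : realType) (m : nat) (s : {set 'I_m}) : set 'rV[R]_m :=
  [set x | (forall j, 0 <= x ord0 j) /\ \sum_j x ord0 j = 1 /\
           (forall j, j \notin s -> x ord0 j = 0)].

Arguments geom_simplex R {m} s.

Definition polyhedron (R : realType) (m : nat) (K : {set {set 'I_m}}) : set 'rV[R]_m :=
  [set x | exists2 s, s \in K & geom_simplex R s x].

Arguments polyhedron R {m} K.

Definition affine_on (R : realType) (m n : nat) (S : set 'rV[R]_m)
  (f : 'rV[R]_m -> 'rV[R]_n) : Prop :=
  forall x y t, S x -> S y -> 0 <= t <= 1 ->
    f (t *: x + (1 - t) *: y) = t *: f x + (1 - t) *: f y.

Definition piecewise_linear (R : realType) (m n : nat) (K : {set {set 'I_m}})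
  (f : 'rV[R]_m -> 'rV[R]_n) : Prop :=
  forall s, s \in K -> affine_on (geom_simplex R s) f.

Definition is_norm (R : realType) (n : nat) (N : 'rV[R]_n -> R) : Prop :=
  (forall x y, N (x + y) <= N x + N y) /\
  (forall (a : R) x, N (a *: x) = `|a| * N x) /\
  (forall x, N x = 0 -> x = 0).

Definition chi_vertex (R : realType) (n : nat) (N : 'rV[R]_n -> R) (alpha : R)
  (y : 'rV[R]_n) : R :=
  if N y < alpha then 0 else if N y == alpha then 1 / 2 else 1.

(* the piecewise linear function chi on |K| with the prescribed vertex values,
   written in barycentric coordinates *)
Definition chi (R : realType) (m n : nat) (N : 'rV[R]_n -> R) (alpha : R)
  (f : 'rV[R]_m -> 'rV[R]_n) (x : 'rV[R]_m) : R :=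
  \sum_i x ord0 i * chi_vertex N alpha (f (vtx R i)).

From HB Require Import structures.
From mathcomp Require Import all_boot all_order all_algebra.
From mathcomp Require Import all_classical all_reals all_analysis.
From mathcomp Require Import ring lra.
Import Order.TTheory GRing.Theory Num.Theory.
Import numFieldNormedType.Exports.
Local Open Scope classical_set_scope.
Local Open Scope ring_scope.

(* Call a vertex low if |f| < alpha there.  On |K|, f is the barycentric
   interpolation of its vertex values, and by the vertex-minimum hypothesis
   f vanishes at a point only if it vanishes at every vertex of its carrier
   simplex; hence f <> 0 wherever the high vertices carry positive barycentric
   mass, e.g. on {chi > 1/2}.  So both
   extension problems are equivalent to finding a nonvanishing map on all of
   |K| that agrees with f on {|f| >= alpha}, resp. on {chi >= 1/2}.  Such maps
   are transported from one region to the other by precomposing with a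
   deformation of |K| that rescales the low barycentric coordinates: it is the
   identity on the target region and, on the boundary level, collapses each
   point onto the face spanned by its high vertices, where |f| >= alpha and
   chi >= 1/2. *)

Section within_continuity.
Context {T U V : topologicalType}.

Lemma within_comp_continuous (A : set T) (B : set U) (g : T -> U) (h : U -> V) :
  (forall x, A x -> B (g x)) -> {within A, continuous g} ->
  {within B, continuous h} -> {within A, continuous (h \o g)}.
Proof.
move=> gAB /subspace_continuousP g_cont /subspace_continuousP h_cont.
apply/subspace_continuousP => x Ax Q /= hQ.
have := g_cont _ Ax _ (h_cont _ (gAB _ Ax) _ hQ).
rewrite /from_subspace /within /= !nbhs_simpl /=; apply: filterS => z /= Qz Az.
exact: Qz (gAB _ Az).
Qed.

Lemma within_continuous_eq (A : set T) (g h : T -> U) :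
  (forall x, A x -> g x = h x) -> {within A, continuous g} -> {within A, continuous h}.
Proof. by move=> gh; apply: subspace_eq_continuous => x /set_mem; exact: gh. Qed.

Lemma within_continuous_paste (A B C : set T) (g : T -> U) :
  closed A -> closed B -> C `<=` A `|` B ->
  {within A, continuous g} -> {within B, continuous g} -> {within C, continuous g}.
Proof.
move=> cA cB CAB gA gB; apply: (continuous_subspaceW CAB).
exact: withinU_continuous.
Qed.

End within_continuity.

Section real_valued_continuity.
Context {R : realType} {T : topologicalType} {g : T -> R}.
Hypothesis g_cont : continuous g.

Lemma closed_fun_le c : closed [set x | g x <= c].
Proof. exact: (preimage_closed (fun x _ => g_cont x) (@closed_le _ c)). Qed.

Lemma closed_fun_ge c : closed [set x | c <= g x].
Proof. exact: (preimage_closed (fun x _ => g_cont x) (@closed_ge _ c)). Qed.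

Lemma closed_fun_eq c : closed [set x | g x = c].
Proof. exact: (preimage_closed (fun x _ => g_cont x) (@closed_eq _ c)). Qed.

End real_valued_continuity.

Section row_vectors.
Context {R : realType} {m : nat}.

Lemma row_vtxE (c : 'I_m -> R) : \row_j c j = \sum_j c j *: vtx R j.
Proof.
apply/rowP => k; rewrite !mxE summxE (bigD1 k) //= big1 ?addr0.
  by rewrite !mxE eqxx mulr1.
by move=> j /negbTE jk; rewrite !mxE eq_sym jk mulr0.
Qed.

Lemma vtx_coord (i j : 'I_m) : vtx R i ord0 j = (j == i)%:R.
Proof. by rewrite mxE; case: eqP. Qed.

Lemma mx_norm_coord_le (x : 'rV[R]_m) j : `|x ord0 j| <= `|x|.
Proof.
rewrite (_ : `|x| = mx_norm x) // mx_normrE; apply/bigmax_geP; right => /=.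
by exists (ord0, j).
Qed.

Lemma continuous_row {T : topologicalType} (g : 'I_m -> T -> R) x :
  (forall j, {for x, continuous (g j)}) ->
  {for x, continuous (fun y => \row_j g j y)}.
Proof.
move=> g_cont.
have -> : (fun y => \row_j g j y) = (fun y => \sum_j g j y *: vtx R j).
  by apply/funext => y; exact: row_vtxE.
apply: cvg_big => //; first exact: add_continuous.
by move=> j _; apply: continuousZr_tmp; exact: g_cont.
Qed.

Lemma continuous_coord_sum (Q : pred 'I_m) :
  continuous (fun x : 'rV[R]_m => \sum_(i | Q i) x ord0 i).
Proof.
apply: continuous_big; first exact: add_continuous.
by move=> i _; exact: coord_continuous.
Qed.

End row_vectors.

Section is_norm_theory.
Context {R : realType} {n : nat} {N : 'rV[R]_n -> R}.
Hypothesis hN : is_norm N.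

Lemma is_normZ a x : N (a *: x) = `|a| * N x.
Proof. exact: hN.2.1. Qed.

Lemma is_norm0 : N 0 = 0.
Proof. by have := is_normZ 0 0; rewrite scale0r normr0 mul0r. Qed.

Lemma is_normN x : N (- x) = N x.
Proof. by have := is_normZ (-1) x; rewrite scaleN1r normrN normr1 mul1r. Qed.

Lemma is_norm_ge0 x : 0 <= N x.
Proof. by have := hN.1 x (- x); rewrite subrr is_norm0 is_normN; lra. Qed.

Lemma is_norm_le0 x : N x <= 0 -> x = 0.
Proof. by move=> Nx0; apply: hN.2.2; apply/eqP; rewrite eq_le Nx0 is_norm_ge0. Qed.

Lemma is_norm_sum (I : finType) (Q : pred I) (F : I -> 'rV[R]_n) :
  N (\sum_(i | Q i) F i) <= \sum_(i | Q i) N (F i).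
Proof.
elim/big_rec2: _ => [|i y1 y2 _ IH]; first by rewrite is_norm0.
by apply: le_trans (hN.1 _ _) _; rewrite lerD2l.
Qed.

Lemma is_norm_le_mx_norm x : N x <= (\sum_j N (vtx R j)) * `|x|.
Proof.
rewrite {1}(_ : x = \sum_j x ord0 j *: vtx R j); last first.
  by rewrite -row_vtxE; apply/rowP => j; rewrite mxE.
rewrite mulr_suml; apply: le_trans (is_norm_sum _ _ _) _.
apply: ler_sum => j _; rewrite is_normZ mulrC ler_wpM2l ?is_norm_ge0 //.
exact: mx_norm_coord_le.
Qed.

Lemma is_norm_continuous : continuous N.
Proof.
move=> x; apply/(@cvgrPdist_lt _ _ _ (nbhs x) (nbhs_filter x)) => e e_gt0.
set C := \sum_j N (vtx R j).
have C_ge0 : 0 <= C by apply: sumr_ge0 => j _; exact: is_norm_ge0.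
have d_gt0 : 0 < e / (C + 1) by rewrite divr_gt0 // ltr_wpDl.
near=> y.
have Nxy : `|N x - N y| <= N (x - y).
  have := hN.1 (y - x) x; have := hN.1 (x - y) y.
  rewrite !subrK -opprB is_normN => h1 h2.
  by rewrite ler_norml; apply/andP; split; lra.
apply: le_lt_trans Nxy _; apply: le_lt_trans (is_norm_le_mx_norm _) _.
have xy : `|x - y| < e / (C + 1) by near: y; apply: cvgr_dist_lt => //; exact: cvg_id.
apply: le_lt_trans (ler_wpM2l C_ge0 (ltW xy)) _.
by rewrite mulrA ltr_pdivrMr ?ltr_wpDl // mulrC ltr_pM2l // ltrDl.
Unshelve. all: by end_near.
Qed.

End is_norm_theory.

Section geom_simplex_theory.
Context {R : realType} {m : nat}.
Implicit Types (s : {set 'I_m}) (x : 'rV[R]_m) (K : {set {set 'I_m}}).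

Lemma geom_simplex_ge0 {s x} j : geom_simplex R s x -> 0 <= x ord0 j.
Proof. by case=> x_ge0 _; exact: x_ge0. Qed.

Lemma geom_simplex_sum {s x} : geom_simplex R s x -> \sum_j x ord0 j = 1.
Proof. by case=> _ []. Qed.

Lemma geom_simplex_out {s x j} : geom_simplex R s x -> j \notin s -> x ord0 j = 0.
Proof. by case=> _ [_ x_out]; exact: x_out. Qed.

Lemma geom_simplex_le1 {s x} j : geom_simplex R s x -> x ord0 j <= 1.
Proof.
move=> sx; rewrite -(geom_simplex_sum sx) (bigD1 j) //= lerDl.
by apply: sumr_ge0 => i _; exact: geom_simplex_ge0 sx.
Qed.

Lemma geom_simplex_vtx {s i} : i \in s -> geom_simplex R s (vtx R i).
Proof.
move=> i_s; split; [|split].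
- by move=> j; rewrite vtx_coord ler0n.
- rewrite (bigD1 i) //= vtx_coord eqxx big1 ?addr0 // => j /negbTE ji.
  by rewrite vtx_coord ji.
- by move=> j; rewrite vtx_coord; case: eqP => // ->; rewrite i_s.
Qed.

Lemma geom_simplex_coord1 {s x} v : geom_simplex R s x -> x ord0 v = 1 -> x = vtx R v.
Proof.
move=> sx xv1; apply/rowP => j; rewrite vtx_coord; case: eqP => [->//|/eqP jv].
have := geom_simplex_sum sx; rewrite (bigD1 v) //= xv1 => sum1.
have : \sum_(i < m | i != v) x ord0 i == 0 by apply/eqP; lra.
rewrite psumr_eq0 => [/allP /(_ j) |i _]; last exact: geom_simplex_ge0 sx.
by rewrite mem_index_enum jv /= => /(_ isT) /eqP.
Qed.

Lemma geom_simplex_closed s : closed (geom_simplex R s).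
Proof.
have -> : geom_simplex R s = (\bigcap_(j in setT) [set x | 0 <= x ord0 j]) `&`
   ([set x | \sum_j x ord0 j = 1] `&`
    \bigcap_(j in [set j | j \notin s]) [set x | x ord0 j = 0]).
  apply/seteqP; split => x /= [x_ge0 [x_sum x_out]].
    by split; [move=> j _; exact: x_ge0|split=> // j _; exact: x_out].
  by split; [move=> j; exact: x_ge0 | split=> // j; exact: x_out].
apply: closedI; first by apply: closed_bigI => j _; exact/closed_fun_ge/coord_continuous.
apply: closedI; first exact/closed_fun_eq/continuous_coord_sum.
by apply: closed_bigI => j _; exact/closed_fun_eq/coord_continuous.
Qed.

Lemma polyhedron_closed K : closed (polyhedron R K).
Proof.
have -> : polyhedron R K = \bigcup_(s in [set s | s \in K]) geom_simplex R s.
  by apply/seteqP; split => x /= [s sK sx]; exists s.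
apply: closed_bigcup; first exact: finite_finset.
by move=> s _; exact: geom_simplex_closed.
Qed.

Definition supp x : {set 'I_m} := [set j | x ord0 j != 0].

Lemma supp_sub {s x} : geom_simplex R s x -> supp x \subset s.
Proof.
move=> sx; apply/fintype.subsetP => j; rewrite inE; apply: contraR => j_s.
by rewrite (geom_simplex_out sx j_s).
Qed.

Lemma supp_neq0 {s x} : geom_simplex R s x -> supp x != finset.set0.
Proof.
move=> sx; apply/finset.set0Pn; apply/existsP; apply: contraT.
rewrite negb_exists => /forallP x0; have := geom_simplex_sum sx.
rewrite big1 => [/esym/eqP|j _]; first by rewrite oner_eq0.
by have := x0 j; rewrite inE negbK => /eqP.
Qed.

Lemma geom_simplex_supp {s x} : geom_simplex R s x -> geom_simplex R (supp x) x.
Proof.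
move=> sx; split; first by move=> j; exact: geom_simplex_ge0 sx.
split; first exact: geom_simplex_sum sx.
by move=> j; rewrite inE negbK => /eqP.
Qed.

Lemma supp_in_complex {K s x} : is_simplicial_complex K ->
  s \in K -> geom_simplex R s x -> supp x \in K.
Proof. by move=> hK sK sx; exact: hK.2 s _ sK (supp_sub sx) (supp_neq0 sx). Qed.

(* For [x] in a simplex and a vertex [v] with [x_v <> 1], the point [drop_vtx v x]
   is where the ray from [v] through [x] leaves the simplex, on the face opposite [v]. *)
Definition drop_vtx v x := (1 - x ord0 v)^-1 *: (x - x ord0 v *: vtx R v).

Lemma drop_vtx_coord v x j :
  drop_vtx v x ord0 j = if j == v then 0 else (1 - x ord0 v)^-1 * x ord0 j.
Proof.
rewrite !mxE; case: eqP => [->|]; first by rewrite mulr1 subrr mulr0.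
by rewrite mulr0 subr0.
Qed.

Lemma geom_simplex_drop_vtx {s x} v : geom_simplex R s x -> x ord0 v != 1 ->
  geom_simplex R s (drop_vtx v x).
Proof.
move=> sx xv1.
have xv_lt1 : 0 < 1 - x ord0 v.
  by rewrite subr_gt0 lt_neqAle xv1 (geom_simplex_le1 v sx).
split; [|split].
- move=> j; rewrite drop_vtx_coord; case: eqP => // _.
  by rewrite mulr_ge0 ?invr_ge0 ?(ltW xv_lt1) // (geom_simplex_ge0 _ sx).
- rewrite (bigD1 v) //= drop_vtx_coord eqxx add0r.
  under eq_bigr => j /negbTE jv do rewrite drop_vtx_coord jv.
  rewrite -mulr_sumr; have := geom_simplex_sum sx; rewrite (bigD1 v) //= => sum1.
  have -> : \sum_(i < m | i != v) x ord0 i = 1 - x ord0 v by lra.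
  by rewrite mulVf // gt_eqF.
- move=> j j_s; rewrite drop_vtx_coord (geom_simplex_out sx j_s) mulr0.
  by case: eqP.
Qed.

Lemma drop_vtxE {s x} v : geom_simplex R s x -> x ord0 v != 1 ->
  x = x ord0 v *: vtx R v + (1 - x ord0 v) *: drop_vtx v x.
Proof.
move=> sx xv1; have xv_neq1 : 1 - x ord0 v != 0 by rewrite subr_eq0 eq_sym.
by apply/rowP => j; rewrite !mxE; case: eqP => _; field.
Qed.

Lemma supp_drop_vtx_lt {s x} v : geom_simplex R s x -> v \in supp x ->
  (#|supp (drop_vtx v x)| < #|supp x|)%N.
Proof.
move=> sx v_x; apply: proper_card; apply/fintype.properP; split.
- apply/fintype.subsetP => j; rewrite !inE drop_vtx_coord.
  case: (j =P v) => [->|_]; first by rewrite eqxx.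
  by apply: contraNN => /eqP ->; rewrite mulr0.
- by exists v => //; rewrite inE drop_vtx_coord eqxx eqxx.
Qed.

End geom_simplex_theory.

Section barycentric_interpolation.
Context {R : realType} {m n : nat}.

Definition bary_interp (w : 'I_m -> 'rV[R]_n) (x : 'rV[R]_m) : 'rV[R]_n :=
  \sum_i x ord0 i *: w i.

Lemma bary_interp_comb w a b x y :
  bary_interp w (a *: x + b *: y) = a *: bary_interp w x + b *: bary_interp w y.
Proof.
rewrite /bary_interp !scaler_sumr -big_split /=; apply: eq_bigr => i _.
by rewrite !mxE scalerDl !scalerA.
Qed.

Lemma bary_interp_vtx w i : bary_interp w (vtx R i) = w i.
Proof.
rewrite /bary_interp (bigD1 i) //= vtx_coord eqxx scale1r big1 ?addr0 //.
by move=> j /negbTE ji; rewrite vtx_coord ji scale0r.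
Qed.

Lemma bary_interp_continuous w : continuous (bary_interp w).
Proof.
apply: continuous_big; first exact: add_continuous.
by move=> i _ x; apply: continuousZr_tmp; exact: coord_continuous.
Qed.

Lemma piecewise_linear_interp (K : {set {set 'I_m}}) (f : 'rV[R]_m -> 'rV[R]_n) x :
  piecewise_linear K f -> polyhedron R K x ->
  f x = bary_interp (fun i => f (vtx R i)) x.
Proof.
move=> hf; have [k] := ubnP #|supp x|; elim: k x => // k IH x.
rewrite ltnS => x_k [s sK sx].
have /finset.set0Pn [v v_x] := supp_neq0 sx.
have v_s : v \in s by exact: (elimT fintype.subsetP (supp_sub sx) v v_x).
have [xv1|xv1] := eqVneq (x ord0 v) 1.
  by rewrite (geom_simplex_coord1 v sx xv1) bary_interp_vtx.
have sy := geom_simplex_drop_vtx v sx xv1.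
rewrite (drop_vtxE v sx xv1) (hf _ sK _ _ _ (geom_simplex_vtx v_s) sy); last first.
  by rewrite (geom_simplex_ge0 _ sx) (geom_simplex_le1 _ sx).
rewrite bary_interp_comb bary_interp_vtx -IH //; last by exists s.
exact: leq_trans (supp_drop_vtx_lt v sx v_x) x_k.
Qed.

End barycentric_interpolation.

Section nonvanishing_extension.
Context {R : realType} {T : topologicalType} {V : normedModType R}.

Definition nonvanishing_extension (D B : set T) (h : T -> V) : Prop :=
  exists F : T -> V, {within D, continuous F} /\ (forall x, D x -> F x != 0) /\
    (forall x, B x -> F x = h x).

Lemma nonvanishing_extension_eq (D B : set T) (h h' : T -> V) :
  (forall x, B x -> h x = h' x) ->
  nonvanishing_extension D B h <-> nonvanishing_extension D B h'.
Proof.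
move=> hh'; split=> -[F [F_cont [F_neq0 F_ext]]]; exists F; do 2 split=> //.
  by move=> x Bx; rewrite F_ext // hh'.
by move=> x Bx; rewrite F_ext // hh'.
Qed.

(* Outside the sublevel set [h] itself is a nonvanishing continuation. *)
Lemma nonvanishing_extension_sublevel (P : set T) (g : T -> R) (h : T -> V) c :
  closed P -> continuous g -> continuous h ->
  (forall x, P x -> 0 <= g x) -> (forall x, P x -> c < g x -> h x != 0) ->
  nonvanishing_extension [set x | P x /\ 0 <= g x <= c] [set x | P x /\ g x = c] h <->
  nonvanishing_extension P [set x | P x /\ c <= g x] h.
Proof.
move=> P_closed g_cont h_cont g_ge0 h_neq0; split.
- move=> [F [F_cont [F_neq0 F_ext]]].
  have F_h x : P x -> g x <= c -> c <= g x -> F x = h x.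
    by move=> Px gc cg; apply: F_ext; split=> //; apply/eqP; rewrite eq_le gc cg.
  exists (fun x => if g x <= c then F x else h x); split; [|split].
  + apply: (@within_continuous_paste _ _ (P `&` [set x | g x <= c])
                                          (P `&` [set x | c <= g x])).
    * exact: closedI P_closed (closed_fun_le g_cont c).
    * exact: closedI P_closed (closed_fun_ge g_cont c).
    * by move=> x Px; case: (lerP (g x) c) => gc; [left|right; split=> //; exact: ltW].
    * apply: (@within_continuous_eq _ _ _ F); first by move=> x [_ ->].
      by apply: continuous_subspaceW F_cont => x [Px gc]; split=> //; rewrite g_ge0.
    * apply: (@within_continuous_eq _ _ _ h); last exact: continuous_subspaceT.
      by move=> x [Px cg]; case: ifP => // gc; rewrite F_h.
  + move=> x Px; case: ifPn => gc; first by apply: F_neq0; split=> //; rewrite g_ge0.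
    by apply: h_neq0; rewrite // ltNge.
  + by move=> x [Px cg]; case: ifP => // gc; rewrite F_h.
- move=> [F [F_cont [F_neq0 F_ext]]]; exists F; split; [|split].
  + by apply: continuous_subspaceW F_cont => x [].
  + by move=> x [Px _]; exact: F_neq0.
  + by move=> x [Px gc]; apply: F_ext; rewrite /= gc.
Qed.

End nonvanishing_extension.

Section vertex_partition.
Context {R : realType} {m : nat} (L : pred 'I_m).
Implicit Types (s : {set 'I_m}) (x : 'rV[R]_m).

Definition low_mass x := \sum_(i | L i) x ord0 i.
Definition high_mass x := \sum_(i | ~~ L i) x ord0 i.

(* For [l = 0] this projects onto the face spanned by the vertices outside [L]. *)
Definition shrink_low (l : R) x : 'rV[R]_m :=
  (l * low_mass x + high_mass x)^-1 *: \row_j ((if L j then l else 1) * x ord0 j).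

Lemma mass_sum {s x} : geom_simplex R s x -> low_mass x + high_mass x = 1.
Proof. by move=> sx; rewrite -(geom_simplex_sum sx) (bigID L). Qed.

Lemma low_mass_ge0 {s x} : geom_simplex R s x -> 0 <= low_mass x.
Proof. by move=> sx; apply: sumr_ge0 => i _; exact: geom_simplex_ge0 sx. Qed.

Lemma high_mass_ge0 {s x} : geom_simplex R s x -> 0 <= high_mass x.
Proof. by move=> sx; apply: sumr_ge0 => i _; exact: geom_simplex_ge0 sx. Qed.

Lemma high_mass_le0_coord {s x} : geom_simplex R s x -> high_mass x <= 0 ->
  forall i, ~~ L i -> x ord0 i = 0.
Proof.
move=> sx hx0 i Li; have : high_mass x == 0 by rewrite eq_le hx0 (high_mass_ge0 sx).
rewrite psumr_eq0 => [/allP /(_ i)|j _]; last exact: geom_simplex_ge0 sx.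
by rewrite mem_index_enum Li /= => /(_ isT) /eqP.
Qed.

Lemma shrink_low_coord l x j : shrink_low l x ord0 j =
  (l * low_mass x + high_mass x)^-1 * ((if L j then l else 1) * x ord0 j).
Proof. by rewrite !mxE. Qed.

Lemma high_mass_shrink l x :
  high_mass (shrink_low l x) = (l * low_mass x + high_mass x)^-1 * high_mass x.
Proof.
rewrite [in LHS]/high_mass.
under eq_bigr => i /negbTE Li do rewrite shrink_low_coord Li mul1r.
by rewrite -mulr_sumr.
Qed.

Lemma low_mass_shrink l x :
  low_mass (shrink_low l x) = (l * low_mass x + high_mass x)^-1 * (l * low_mass x).
Proof.
rewrite [in LHS]/low_mass; under eq_bigr => i Li do rewrite shrink_low_coord Li.
by rewrite -!mulr_sumr.
Qed.

Lemma geom_simplex_shrink_low {s x} l : geom_simplex R s x -> 0 <= l ->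
  0 < l * low_mass x + high_mass x -> geom_simplex R s (shrink_low l x).
Proof.
move=> sx l_ge0 den_gt0; split; [|split].
- move=> j; rewrite shrink_low_coord mulr_ge0 ?invr_ge0 ?(ltW den_gt0) //.
  by rewrite mulr_ge0 ?(geom_simplex_ge0 _ sx) //; case: (L j).
- rewrite (bigID L) /= -/(low_mass _) -/(high_mass _) low_mass_shrink high_mass_shrink.
  by rewrite -mulrDr mulVf ?gt_eqF.
- by move=> j j_s; rewrite shrink_low_coord (geom_simplex_out sx j_s) !mulr0.
Qed.

Lemma shrink_low1 {s x} : geom_simplex R s x -> shrink_low 1 x = x.
Proof.
move=> sx; apply/rowP => j; rewrite shrink_low_coord mul1r (mass_sum sx) invr1 mul1r.
by case: (L j); rewrite mul1r.
Qed.

Lemma shrink_low_den_gt0 {s x} l : geom_simplex R s x -> 0 <= l <= 1 ->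
  (0 < l) || (0 < high_mass x) -> 0 < l * low_mass x + high_mass x.
Proof.
move=> sx /andP[l_ge0 l_le1] /orP[l_gt0|hx_gt0]; last first.
  by apply: lt_le_trans hx_gt0 _; rewrite lerDr mulr_ge0 // (low_mass_ge0 sx).
have : l * low_mass x + l * high_mass x = l by rewrite -mulrDr (mass_sum sx) mulr1.
have : l * high_mass x <= high_mass x by rewrite ler_piMl // (high_mass_ge0 sx).
lra.
Qed.

Lemma geom_simplex_shrink_low0 {s x} : geom_simplex R s x -> 0 < high_mass x ->
  geom_simplex R s (shrink_low 0 x).
Proof. by move=> sx hx_gt0; apply: geom_simplex_shrink_low sx _ _; rewrite // mul0r add0r. Qed.

Lemma high_mass_shrink_low0 x : 0 < high_mass x -> high_mass (shrink_low 0 x) = 1.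
Proof. by move=> hx_gt0; rewrite high_mass_shrink mul0r add0r mulVf ?gt_eqF. Qed.

Lemma shrink_low0_coord x i : L i -> shrink_low 0 x ord0 i = 0.
Proof. by move=> Li; rewrite shrink_low_coord Li !mul0r mulr0. Qed.

Lemma low_mass_continuous : continuous low_mass.
Proof. exact: continuous_coord_sum. Qed.

Lemma high_mass_continuous : continuous high_mass.
Proof. exact: continuous_coord_sum. Qed.

Lemma shrink_low_continuous (l : 'rV[R]_m -> R) x : {for x, continuous l} ->
  l x * low_mass x + high_mass x != 0 -> {for x, continuous (fun y => shrink_low (l y) y)}.
Proof.
move=> l_cont den_neq0.
have den_cont : {for x, continuous (fun y => l y * low_mass y + high_mass y)}.
  apply: (@continuousD _ _ _ (fun y => l y * low_mass y) high_mass x).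
    exact: (@continuousM _ _ l low_mass x l_cont (low_mass_continuous x)).
  exact: high_mass_continuous.
apply: (@continuousZ _ _ _ (fun y => (l y * low_mass y + high_mass y)^-1)).
  exact: (@continuousV _ _ (fun y => l y * low_mass y + high_mass y) x den_neq0 den_cont).
apply: continuous_row => j; case: (L j).
  exact: (@continuousM _ _ l (fun y => y ord0 j) x l_cont (@coord_continuous R _ _ ord0 j x)).
have -> : (fun y : 'rV[R]_m => 1 * y ord0 j) = (fun y => y ord0 j).
  by apply/funext => y; rewrite mul1r.
exact: coord_continuous.
Qed.

End vertex_partition.

Section ramp.
Context {R : realType}.

Definition ramp (t : R) := Num.min 1 `|2 * t - 1|.

Lemma ramp_ge0 t : 0 <= ramp t.
Proof. by rewrite /ramp le_min ler01 normr_ge0. Qed.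

Lemma ramp_le1 t : ramp t <= 1.
Proof. by rewrite /ramp ge_min lexx. Qed.

Lemma ramp_half : ramp (1 / 2) = 0.
Proof. by rewrite /ramp (_ : 2 * (1 / 2) - 1 = 0 :> R) ?normr0 ?min_r //; lra. Qed.

Lemma ramp_gt0 t : t != 1 / 2 -> 0 < ramp t.
Proof.
move=> t_half; rewrite /ramp lt_min ltr01 normr_gt0 subr_eq0.
by apply: contra t_half => /eqP t_eq; apply/eqP; lra.
Qed.

Lemma ramp_ge1 t : 1 <= t -> ramp t = 1.
Proof. by move=> t_ge1; rewrite /ramp min_l // ger0_norm; lra. Qed.

Lemma continuous_ramp_comp {T : topologicalType} (phi : T -> R) :
  continuous phi -> continuous (fun x => ramp (phi x)).
Proof.
move=> phi_cont x; apply: (@continuous_min _ _ (fun _ => 1) (fun y => `|2 * phi y - 1|)).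
  exact: cst_continuous.
have affine_cont : {for x, continuous (fun y => 2 * phi y - 1)}.
  apply: (@continuousB _ _ _ (fun y => 2 * phi y) (fun _ => 1) x); last exact: cst_continuous.
  by apply: continuousM; [exact: cst_continuous|exact: phi_cont].
exact: (continuous_comp affine_cont (@norm_continuous _ _ _)).
Qed.

End ramp.

Section deformation.
Context {R : realType} {m : nat} {V : normedModType R}.
Context (K : {set {set 'I_m}}) (L : pred 'I_m) (phi : 'rV[R]_m -> R) (h : 'rV[R]_m -> V).
Hypothesis phi_cont : continuous phi.
Hypothesis phi_high : forall x, polyhedron R K x -> 1 / 2 <= phi x -> 0 < high_mass L x.
Hypothesis h_cont : continuous h.
Hypothesis h_neq0 : forall x, polyhedron R K x -> 0 < high_mass L x -> h x != 0.
Local Notation P := (polyhedron R K).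

Definition deform x := shrink_low L (ramp (phi x)) x.

Lemma deform_den_gt0 x : P x -> 0 < ramp (phi x) * low_mass L x + high_mass L x.
Proof.
move=> [s sK sx]; apply: (shrink_low_den_gt0 L _ sx); first by rewrite ramp_ge0 ramp_le1.
have [phi_half|phi_half] := eqVneq (phi x) (1 / 2).
  by rewrite phi_high ?orbT //; [exists s|rewrite phi_half].
by rewrite ramp_gt0.
Qed.

Lemma polyhedron_deform x : P x -> P (deform x).
Proof.
move=> Px; case: (Px) => s sK sx; exists s => //.
apply: (geom_simplex_shrink_low L _ sx); [exact: ramp_ge0|exact: deform_den_gt0].
Qed.

Lemma deform_continuous : {within P, continuous deform}.
Proof.
apply: continuous_in_subspaceT => x /set_mem Px.
apply: shrink_low_continuous; last by rewrite gt_eqF // deform_den_gt0.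
exact: continuous_ramp_comp.
Qed.

Lemma high_mass_deform_gt0 x : P x -> 0 < high_mass L x -> 0 < high_mass L (deform x).
Proof.
by move=> Px hx_gt0; rewrite high_mass_shrink mulr_gt0 // invr_gt0 deform_den_gt0.
Qed.

Lemma deform_half x : phi x = 1 / 2 -> deform x = shrink_low L 0 x.
Proof. by move=> phi_half; rewrite /deform phi_half ramp_half. Qed.

Lemma deform_id x : P x -> 1 <= phi x -> deform x = x.
Proof. by move=> [s _ sx] phi_ge1; rewrite /deform ramp_ge1 // (shrink_low1 L sx). Qed.

(* Where [phi >= 1/2] use [h \o deform], elsewhere [F \o deform]; the two agree
   on [phi = 1/2] because [deform] lands in [W] there. *)
Lemma nonvanishing_extension_deform (W U : set 'rV[R]_m) :
  (forall x, U x -> P x /\ 1 <= phi x) ->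
  (forall x, P x -> 0 < high_mass L x -> W (shrink_low L 0 x)) ->
  nonvanishing_extension P W h -> nonvanishing_extension P U h.
Proof.
move=> U_phi high_W [F [F_cont [F_neq0 F_W]]].
have h_deform_neq0 x : P x -> 1 / 2 <= phi x -> h (deform x) != 0.
  move=> Px phi_ge; apply: h_neq0; first exact: polyhedron_deform.
  by apply: high_mass_deform_gt0; last exact: phi_high.
exists (fun x => if 1 / 2 <= phi x then h (deform x) else F (deform x)); split; [|split].
- apply: (@within_continuous_paste _ _ (P `&` [set x | 1 / 2 <= phi x])
                                        (P `&` [set x | phi x <= 1 / 2])).
  + exact: closedI (polyhedron_closed K) (closed_fun_ge phi_cont _).
  + exact: closedI (polyhedron_closed K) (closed_fun_le phi_cont _).
  + move=> x Px; case: (lerP (1 / 2) (phi x)) => phi_x; [left|right]; split=> //.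
    exact: ltW.
  + apply: (@within_continuous_eq _ _ _ (h \o deform)); first by move=> x [_ ->].
    apply: within_continuous_comp => [y _|]; first exact: h_cont.
    exact: continuous_subspaceW deform_continuous.
  + apply: (@within_continuous_eq _ _ _ (F \o deform)).
      move=> x [Px phi_le] /=; case: ifP => // phi_ge.
      have phi_half : phi x = 1 / 2 by apply/eqP; rewrite eq_le phi_le phi_ge.
      rewrite F_W // deform_half //; apply: high_W => //.
      by apply: phi_high; rewrite // phi_half.
    apply: (@within_comp_continuous _ _ _ _ P) => //.
      by move=> x [Px _]; exact: polyhedron_deform.
    exact: continuous_subspaceW deform_continuous.
- move=> x Px; case: ifP => phi_x; first exact: h_deform_neq0.
  exact/F_neq0/polyhedron_deform.
- move=> x /U_phi [Px phi_ge1].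
  by rewrite deform_id // ifT //; apply: le_trans phi_ge1; lra.
Qed.

End deformation.

Section level_sets.
Context {R : realType} {m n : nat} {K : {set {set 'I_m}}} {N : 'rV[R]_n -> R}
  {f : 'rV[R]_m -> 'rV[R]_n} {alpha : R}.
Hypothesis hK : is_simplicial_complex K.
Hypothesis hN : is_norm N.
Hypothesis hf : piecewise_linear K f.
Hypothesis hmin : forall s, s \in K -> exists2 v, v \in s &
  forall x, geom_simplex R s x -> N (f (vtx R v)) <= N (f x).
Hypothesis alpha_gt0 : 0 < alpha.

Local Notation P := (polyhedron R K).
Local Notation w i := (f (vtx R i)).
Local Notation fl := (bary_interp (fun i => f (vtx R i))).

Definition low : pred 'I_m := fun i => N (f (vtx R i)) < alpha.

Lemma f_interp {x} : P x -> f x = fl x.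
Proof. exact: piecewise_linear_interp. Qed.

Lemma supp_min_vtx {x} : P x -> exists2 v, v \in supp x & N (w v) <= N (fl x).
Proof.
move=> Px; case: (Px) => s sK sx.
have [v v_x v_min] := hmin _ (supp_in_complex hK sK sx).
by exists v => //; rewrite -f_interp //; exact: v_min (geom_simplex_supp sx).
Qed.

(* Peel off a vertex of minimal norm, which must vanish, and recurse on the opposite face. *)
Lemma interp_eq0_vtx {x} : P x -> fl x = 0 -> forall i, x ord0 i != 0 -> w i = 0.
Proof.
have [k] := ubnP #|supp x|; elim: k x => // k IH x; rewrite ltnS => x_k Px fl0.
have [v v_x v_min] := supp_min_vtx Px.
have wv0 : w v = 0 by apply: (is_norm_le0 hN); move: v_min; rewrite fl0 (is_norm0 hN).
case: (Px) => s sK sx.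
have [xv1|xv1] := eqVneq (x ord0 v) 1.
  move=> i; rewrite (geom_simplex_coord1 v sx xv1) vtx_coord.
  by have [->|_] := eqVneq i v; rewrite ?eqxx.
have y0 : fl (drop_vtx v x) = 0.
  move: fl0; rewrite {1}(drop_vtxE v sx xv1) bary_interp_comb bary_interp_vtx wv0.
  by rewrite scaler0 add0r => /eqP; rewrite scaler_eq0 subr_eq0 eq_sym (negbTE xv1) => /eqP.
move=> i xi; have [->//|iv] := eqVneq i v.
apply: (IH (drop_vtx v x)) => //.
- exact: leq_trans (supp_drop_vtx_lt v sx v_x) x_k.
- by exists s => //; exact: geom_simplex_drop_vtx.
- by rewrite drop_vtx_coord (negbTE iv) mulf_neq0 // invr_eq0 subr_eq0 eq_sym.
Qed.

Lemma interp_neq0 {x} : P x -> 0 < high_mass low x -> fl x != 0.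
Proof.
move=> Px; apply: contraTneq => fl0; rewrite -leNgt /high_mass big1 // => i.
apply: contraNeq => xi; rewrite /low (interp_eq0_vtx Px fl0 i xi) (is_norm0 hN).
by rewrite ?negbK.
Qed.

Lemma alpha_le_norm_interp {x} : P x -> (forall i, low i -> x ord0 i = 0) ->
  alpha <= N (fl x).
Proof.
move=> Px x_high; have [v v_x v_min] := supp_min_vtx Px.
apply: le_trans v_min; rewrite leNgt; apply: contraL v_x => v_low.
by rewrite inE negbK x_high.
Qed.

Definition low_norm_max := \big[Num.max/0]_(i | low i) N (w i).

Lemma low_norm_max_lt : low_norm_max < alpha.
Proof. exact: bigmax_lt. Qed.

Lemma norm_interp_le_low_norm_max {x} : P x -> (forall i, ~~ low i -> x ord0 i = 0) ->
  N (fl x) <= low_norm_max.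
Proof.
move=> [s sK sx] x_low; apply: le_trans (is_norm_sum hN _ _ _) _.
rewrite -[low_norm_max]mul1r -(geom_simplex_sum sx) mulr_suml.
apply: ler_sum => i _; rewrite (is_normZ hN) ger0_norm ?(geom_simplex_ge0 _ sx) //.
have [i_low|i_high] := boolP (low i); last by rewrite x_low // !mul0r.
by rewrite ler_wpM2l ?(geom_simplex_ge0 _ sx) //; exact: le_bigmax_cond.
Qed.

Lemma chi_vertex_low {i} : low i -> chi_vertex N alpha (w i) = 0.
Proof. by rewrite /chi_vertex /low => ->. Qed.

Lemma chi_vertex_high {i} : ~~ low i -> 1 / 2 <= chi_vertex N alpha (w i) <= 1.
Proof. by rewrite /chi_vertex /low => /negbTE ->; case: eqP => _; apply/andP; split; lra. Qed.

Lemma chi_continuous : continuous (chi N alpha f).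
Proof.
apply: continuous_big; first exact: add_continuous.
move=> i _ x; apply: (@continuousM _ _ (fun y : 'rV[R]_m => y ord0 i)).
  exact: (@coord_continuous R _ _ ord0 i x).
exact: cst_continuous.
Qed.

Lemma chiE x : chi N alpha f x = \sum_(i | ~~ low i) x ord0 i * chi_vertex N alpha (w i).
Proof.
rewrite /chi (bigID low) /= big1 ?add0r // => i i_low.
by rewrite chi_vertex_low ?mulr0.
Qed.

Lemma chi_ge0 {x} : P x -> 0 <= chi N alpha f x.
Proof.
move=> [s _ sx]; rewrite chiE; apply: sumr_ge0 => i i_high.
have /andP[chi_ge _] := chi_vertex_high i_high.
by rewrite mulr_ge0 ?(geom_simplex_ge0 _ sx) //; lra.
Qed.

Lemma chi_le_high_mass {x} : P x -> chi N alpha f x <= high_mass low x.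
Proof.
move=> [s _ sx]; rewrite chiE; apply: ler_sum => i i_high.
have /andP[_ chi_le] := chi_vertex_high i_high.
by rewrite ler_piMr ?(geom_simplex_ge0 _ sx).
Qed.

Lemma half_high_mass_le_chi {x} : P x -> high_mass low x / 2 <= chi N alpha f x.
Proof.
move=> [s _ sx]; rewrite chiE /high_mass mulr_suml; apply: ler_sum => i i_high.
have /andP[chi_ge _] := chi_vertex_high i_high.
by rewrite ler_wpM2l ?(geom_simplex_ge0 _ sx) //; lra.
Qed.

Lemma polyhedron_shrink_low0 {x} : P x -> 0 < high_mass low x -> P (shrink_low low 0 x).
Proof. by move=> [s sK sx] hx_gt0; exists s => //; exact: geom_simplex_shrink_low0. Qed.

Lemma norm_chi_level_extension_iff :
  nonvanishing_extension P [set x | P x /\ alpha <= N (fl x)] fl <->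
  nonvanishing_extension P [set x | P x /\ 1 / 2 <= chi N alpha f x] fl.
Proof.
have low_norm_lt := low_norm_max_lt.
split.
- apply: (nonvanishing_extension_deform K low (fun x => 2 * chi N alpha f x) fl).
  + move=> x; have phi_cont : {for x, continuous (fun y => 2 * chi N alpha f y)}.
      by apply: continuousM; [exact: cst_continuous|exact: chi_continuous].
    exact: phi_cont.
  + by move=> x Px chi_ge; have := chi_le_high_mass Px; lra.
  + exact: bary_interp_continuous.
  + by move=> x Px hx; have := interp_neq0 Px hx.
  + by move=> x [Px chi_ge]; split=> //; lra.
  + move=> x Px hx_gt0; split; first exact: polyhedron_shrink_low0.
    by apply: alpha_le_norm_interp; [exact: polyhedron_shrink_low0|exact: shrink_low0_coord].
- apply: (nonvanishing_extension_deform K low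
    (fun x => (N (fl x) - low_norm_max) / (alpha - low_norm_max)) fl).
  + move=> x; have phi_cont : {for x, continuous
        (fun y => (N (fl y) - low_norm_max) / (alpha - low_norm_max))}.
      apply: continuousM; last exact: cst_continuous.
      apply: continuousB; last exact: cst_continuous.
      exact: continuous_comp (bary_interp_continuous _ x) (is_norm_continuous hN _).
    exact: phi_cont.
  + move=> x [s sK sx] phi_ge; rewrite ltNge; apply/negP => hx_le0.
    have := norm_interp_le_low_norm_max (ex_intro2 _ _ s sK sx) (high_mass_le0_coord low sx hx_le0).
    by move: phi_ge; rewrite ler_pdivlMr ?subr_gt0 //; lra.
  + exact: bary_interp_continuous.
  + by move=> x Px hx; have := interp_neq0 Px hx.
  + by move=> x [Px alpha_le]; split=> //; rewrite ler_pdivlMr ?subr_gt0 // mul1r; lra.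
  + move=> x Px hx_gt0; split; first exact: polyhedron_shrink_low0.
    apply: le_trans (half_high_mass_le_chi (polyhedron_shrink_low0 Px hx_gt0)).
    by rewrite high_mass_shrink_low0.
Qed.

Lemma norm_sublevel_extension_iff :
  nonvanishing_extension [set x | P x /\ 0 <= N (f x) <= alpha]
    [set x | P x /\ N (f x) = alpha] f <->
  nonvanishing_extension P [set x | P x /\ alpha <= N (fl x)] fl.
Proof.
have -> : [set x | P x /\ 0 <= N (f x) <= alpha] = [set x | P x /\ 0 <= N (fl x) <= alpha].
  by apply/seteqP; split=> x [Px] /=; rewrite f_interp.
have -> : [set x | P x /\ N (f x) = alpha] = [set x | P x /\ N (fl x) = alpha].
  by apply/seteqP; split=> x [Px] /=; rewrite f_interp.
apply: iff_trans (nonvanishing_extension_eq _ _ _ fl _) _.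
  by move=> x [Px _]; exact: f_interp.
apply: nonvanishing_extension_sublevel.
- exact: polyhedron_closed.
- by move=> x; exact: continuous_comp (bary_interp_continuous _ x) (is_norm_continuous hN _).
- exact: bary_interp_continuous.
- by move=> x _; exact: is_norm_ge0.
- move=> x Px alpha_lt; apply: contraTneq alpha_lt => ->.
  by rewrite (is_norm0 hN) -leNgt ltW.
Qed.

Lemma chi_sublevel_extension_iff :
  nonvanishing_extension [set x | P x /\ 0 <= chi N alpha f x <= 1 / 2]
    [set x | P x /\ chi N alpha f x = 1 / 2] f <->
  nonvanishing_extension P [set x | P x /\ 1 / 2 <= chi N alpha f x] fl.
Proof.
apply: iff_trans (nonvanishing_extension_eq _ _ _ fl _) _.
  by move=> x [Px _]; exact: f_interp.
apply: nonvanishing_extension_sublevel.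
- exact: polyhedron_closed.
- exact: chi_continuous.
- exact: bary_interp_continuous.
- by move=> x Px; have := chi_ge0 Px.
- by move=> x Px chi_gt; apply: interp_neq0 => //; have := chi_le_high_mass Px; lra.
Qed.

End level_sets.


Theorem corollary3p5 (R : realType) (m n : nat) (K : {set {set 'I_m}})
  (N : 'rV[R]_n -> R) (f : 'rV[R]_m -> 'rV[R]_n) (alpha : R) :
  is_simplicial_complex K ->
  is_norm N ->
  piecewise_linear K f ->
  (forall s, s \in K ->
     (exists2 v, v \in s & forall x, geom_simplex R s x -> N (f (vtx R v)) <= N (f x)) /\
     (exists2 v, v \in s & forall x, geom_simplex R s x -> N (f x) <= N (f (vtx R v)))) ->
  0 < alpha ->
  (exists F : 'rV[R]_m -> 'rV[R]_n,
     {within [set x | polyhedron R K x /\ 0 <= N (f x) <= alpha], continuous F} /\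
     (forall x, polyhedron R K x /\ 0 <= N (f x) <= alpha -> F x != 0) /\
     (forall x, polyhedron R K x /\ N (f x) = alpha -> F x = f x))
  <->
  (exists G : 'rV[R]_m -> 'rV[R]_n,
     {within [set x | polyhedron R K x /\ 0 <= chi N alpha f x <= 1 / 2], continuous G} /\
     (forall x, polyhedron R K x /\ 0 <= chi N alpha f x <= 1 / 2 -> G x != 0) /\
     (forall x, polyhedron R K x /\ chi N alpha f x = 1 / 2 -> G x = f x)).
Proof.
move=> hK hN hf hminmax alpha_gt0.
have hmin s sK := (hminmax s sK).1.
apply: iff_trans (norm_sublevel_extension_iff hN hf alpha_gt0) _.
apply: iff_trans (norm_chi_level_extension_iff hK hN hf hmin alpha_gt0) _.
exact: iff_sym (chi_sublevel_extension_iff hK hN hf hmin alpha_gt0).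
Qed.
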